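(* Let $\mathcal F_1$ and $\mathcal F_2$ be completely positive maps on $M_D$ with spectral radius $1$, where $\mathcal F_1$ is trace-preserving and $\tau(\mathcal F_1)<1$. Let $\rho_1$ be the unique density matrix with $\mathcal F_1(\rho_1)=\rho_1$. Let $\xi\in M_D$ satisfy $\mathcal F_2^\dagger(\xi)=\xi$, normalised so that $\mathrm{Tr}(\rho_1\xi)=1$. Set $$k=\frac{1+\tau(\mathcal F_1)}{1-\tau(\mathcal F_1)}\,\|\mathcal F_1-\mathcal F_2\|_{1\to1}.$$ If $k<1$, then $$\|\mathbb 1-\xi\|_\infty\le\frac{k}{1-k}.$$
   Context: Notation: $M_D$ is the space of complex $D\times D$ matrices and $\|\cdot\|_p$ is the Schatten $p$-norm ($\|\cdot\|_\infty$ the operator norm). For a linear map $\mathcal F$ on $M_D$, $\|\mathcal F\|_{1\to1}:=\sup_{\sigma\ne0}\|\mathcal F(\sigma)\|_1/\|\sigma\|_1$. The dual map $\mathcal F^\dagger$ is defined by $\mathrm{Tr}(A\,\mathcal F(B))=\mathrm{Tr}(\mathcal F^\dagger(A)B)$ for all $A,B$. The ergodicity coefficient is $\tau(\mathcal F):=\sup\{\|\mathcal F(\sigma)\|_1/\|\sigma\|_1:\ 0\ne\sigma\in M_D,\ \mathrm{Tr}\,\sigma=0\}$. A trace-preserving positive map with $\tau<1$ has a unique fixed density matrix. *)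

From HB Require Import structures.
From mathcomp Require Import all_boot all_order all_algebra.
Set Implicit Arguments. Unset Strict Implicit. Unset Printing Implicit Defensive.
Import Order.TTheory GRing.Theory Num.Theory Num.Def.
Local Open Scope ring_scope.
Local Open Scope sesquilinear_scope.

Section Defs.
Variable C : numClosedFieldType.

Definition adjmx m n (A : 'M[C]_(m, n)) : 'M[C]_(n, m) := A ^t*.

Definition psd n (A : 'M[C]_n) : Prop :=
  forall v : 'rV[C]_n, 0 <= (v *m A *m adjmx v) 0 0.

Definition density n (rho : 'M[C]_n) : Prop := psd rho /\ \tr rho = 1.

Definition singvals n (A : 'M[C]_n) : 'I_n -> C :=
  fun i => sqrtC (spectral_diag (adjmx A *m A) 0 i).

Definition tnorm n (A : 'M[C]_n) : C := \sum_i singvals A i.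

Definition opnorm n (A : 'M[C]_n) : C := \big[Num.max/0]_i singvals A i.

Definition is_sup (S : C -> Prop) (x : C) : Prop :=
  x \is Num.real /\ (forall y, S y -> y <= x) /\
  (forall z, z \is Num.real -> (forall y, S y -> y <= z) -> x <= z).

Definition norm11_set D (F : 'M[C]_D -> 'M[C]_D) : C -> Prop :=
  fun r => exists sigma : 'M[C]_D, sigma != 0 /\ r = tnorm (F sigma) / tnorm sigma.

Definition ergodic_set D (F : 'M[C]_D -> 'M[C]_D) : C -> Prop :=
  fun r => exists sigma : 'M[C]_D, sigma != 0 /\ \tr sigma = 0 /\
                             r = tnorm (F sigma) / tnorm sigma.

(* the dual map: Tr(A F(B)) = Tr(F^dagger(A) B) *)
Definition dualmap D (F : 'M[C]_D -> 'M[C]_D) (A : 'M[C]_D) : 'M[C]_D :=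
  \matrix_(i, j) \tr (A *m F (delta_mx j i)).

Definition trace_preserving D (F : 'M[C]_D -> 'M[C]_D) : Prop :=
  forall X, \tr (F X) = \tr X.

Definition splitidx n D (k : 'I_(n * D)) : 'I_n * 'I_D :=
  pair_of_mxvec_index (mxvec_indexP k).

Definition blockof n D (X : 'M[C]_(n * D)) (a b : 'I_n) : 'M[C]_D :=
  \matrix_(i, j) X (mxvec_index a i) (mxvec_index b j).

(* the ampliation id_n (x) F acting on M_n (x) M_D = M_(n*D) *)
Definition ampl n D (F : 'M[C]_D -> 'M[C]_D) (X : 'M[C]_(n * D)) : 'M[C]_(n * D) :=
  \matrix_(k, l) F (blockof X (splitidx k).1 (splitidx l).1)
                   (splitidx k).2 (splitidx l).2.

Definition positive_map D (F : 'M[C]_D -> 'M[C]_D) : Prop :=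
  forall X, psd X -> psd (F X).

Definition completely_positive D (F : 'M[C]_D -> 'M[C]_D) : Prop :=
  forall n, positive_map (@ampl n D F).

Definition spectral_radius D (F : {linear 'M[C]_D -> 'M[C]_D}) (r : C) : Prop :=
  (exists l, eigenvalue (lin_mx F) l /\ `|l| = r) /\
  (forall l, eigenvalue (lin_mx F) l -> `|l| <= r).

End Defs.

From HB Require Import structures.
From mathcomp Require Import all_boot all_order all_algebra.
From mathcomp Require Import ring.
Import Order.TTheory GRing.Theory Num.Theory Num.Def.
Set Implicit Arguments. Unset Strict Implicit. Unset Printing Implicit Defensive.
Local Open Scope ring_scope.
Local Open Scope sesquilinear_scope.

(* Write X = 1 - xi. Since F2^dagger xi = xi and F1 preserves the trace,
   Tr(A X) = Tr(F1(A) X) + Tr((F1 - F2)(A) xi) for every A, while Tr(rho1 X) = 0.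
   Pick sigma with ||sigma||_1 <= 1 and ||X||_oo <= |Tr(sigma X)|.  Then F1(sigma) differs from
   Tr(sigma) rho1 by the traceless S = F1(sigma - Tr(sigma) rho1), of trace norm at most
   2 tau, and S = eta - F1(eta) for a traceless eta with (1 - tau) ||eta||_1 <= ||S||_1.
   Applying the identity to sigma and to eta gives
   ||X||_oo <= n12 (||eta||_1 + ||sigma||_1) ||xi||_oo <= k ||xi||_oo <= k (1 + ||X||_oo). *)


Lemma mxtraceB (R : pzRingType) n (A B : 'M[R]_n) : \tr (A - B) = \tr A - \tr B.
Proof. exact: raddfB. Qed.

Lemma real_maxr_cases (R : numDomainType) (x y : R) :
  x \is Num.real -> y \is Num.real ->
  [/\ x <= maxr x y, y <= maxr x y & maxr x y = x \/ maxr x y = y].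
Proof.
move=> xr yr; rewrite /maxr; case: ifP => xy.
  by split => //; [exact: ltW | right].
by split => //; [rewrite real_leNgt ?xy | left].
Qed.

Section BigmaxNonneg.
Variables (R : numDomainType) (n : nat) (f : 'I_n -> R).
Hypothesis f_ge0 : forall i, 0 <= f i.

Lemma bigmaxr_ge0 : 0 <= \big[maxr/0]_i f i.
Proof.
apply: (big_ind (fun x => 0 <= x)) => // x y x0 y0.
by have [_ _ [->|->]] := real_maxr_cases (ger0_real x0) (ger0_real y0).
Qed.

Lemma le_bigmaxr i : f i <= \big[maxr/0]_j f j.
Proof.
elim: (index_enum _) (mem_index_enum i) => // j r IH; rewrite inE big_cons.
have rest_real : \big[maxr/0]_(k <- r) f k \is Num.real.
  by apply: bigmax_real => // k _; apply: ger0_real.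
have [fj_le rest_le _] := real_maxr_cases (ger0_real (f_ge0 j)) rest_real.
by case/orP => [/eqP-> //|/IH/le_trans]; apply.
Qed.

Lemma bigmaxr_le c : 0 <= c -> (forall i, f i <= c) -> \big[maxr/0]_i f i <= c.
Proof.
move=> c0 fc; suff /andP[] : 0 <= \big[maxr/0]_i f i <= c by [].
apply: (big_ind (fun x => 0 <= x <= c)) => [|x y /andP[x0 xc] /andP[y0 yc]|i];
  rewrite ?lexx ?c0 ?f_ge0 ?fc //.
by have [_ _ [->|->]] := real_maxr_cases (ger0_real x0) (ger0_real y0); apply/andP.
Qed.

Lemma bigmaxr_attained :
  \big[maxr/0]_i f i = 0 \/ exists i, \big[maxr/0]_j f j = f i.
Proof.
apply: (big_ind (fun x => x = 0 \/ exists i, x = f i)); [by left | | by right; exists i].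
move=> x y hx hy.
have real_of z : (z = 0 \/ exists i, z = f i) -> z \is Num.real.
  by case=> [->|[i ->]]; rewrite ?real0 ?(ger0_real (f_ge0 i)).
by have [_ _ [->|->]] := real_maxr_cases (real_of x hx) (real_of y hy).
Qed.

End BigmaxNonneg.

Section Schatten.
Variable C : numClosedFieldType.
Local Notation "''[' u , v ]" := (dotmx u v) : ring_scope.
Local Notation "''[' u ]" := (dotmx u u) : ring_scope.

Lemma adjmxM m n p (A : 'M[C]_(m, n)) (B : 'M[C]_(n, p)) :
  (A *m B)^t* = B^t* *m A^t*.
Proof. by rewrite trmx_mul map_mxM. Qed.

Lemma adjmxD m n (A B : 'M[C]_(m, n)) : (A + B)^t* = A^t* + B^t*.
Proof. by apply/matrixP => i j; rewrite !mxE rmorphD. Qed.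

Lemma adjmxZ m n c (A : 'M[C]_(m, n)) : (c *: A)^t* = c^* *: A^t*.
Proof. by apply/matrixP => i j; rewrite !mxE rmorphM. Qed.

Lemma adjmx_delta_row n (i : 'I_n) : ('e_i : 'rV[C]_n)^t* = delta_mx i 0.
Proof. by apply/matrixP => a b; rewrite !mxE rmorph_nat andbC. Qed.

Lemma adjmx1 n : (1%:M : 'M[C]_n)^t* = 1%:M.
Proof. by apply/matrixP => i j; rewrite !mxE rmorph_nat eq_sym. Qed.

Lemma unitarymx_adjK n (P : 'M[C]_n) : P \is unitarymx -> P^t* *m P = 1%:M.
Proof. by move=> PU; rewrite -invmx_unitary // mulVmx // unitarymx_unit. Qed.

Lemma dnorm_mulmx_unitary n (u : 'rV[C]_n) (P : 'M[C]_n) :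
  P \is unitarymx -> '[u *m P] = '[u].
Proof.
by move=> /unitarymxP PU; rewrite !dotmxE adjmxM mulmxA -(mulmxA u) PU mulmx1.
Qed.

Lemma dnorm_row_unitary n (P : 'M[C]_n) i : P \is unitarymx -> '[row i P] = 1.
Proof. by move/row_unitarymxP => /(_ i i); rewrite eqxx. Qed.

Lemma normr_dotmx_le n (u v : 'rV[C]_n) : `|'[u, v]| <= sqrtC '[u] * sqrtC '[v].
Proof. exact: (CauchySchwarz_sqrt (@dotmx C n) u v).1. Qed.

Lemma row_form_entry n (Q X : 'M[C]_n) i :
  (row i Q *m X *m (row i Q)^t*) 0 0 = (Q *m X *m Q^t*) i i.
Proof.
rewrite !rowE adjmxM adjmx_delta_row !mulmxA.
rewrite -(mulmxA 'e_i Q X) -(mulmxA 'e_i (Q *m X) (Q^t*)).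
by rewrite -rowE -colE !mxE.
Qed.

Lemma hermitian_spectral n (M : 'M[C]_n) (P := spectralmx M)
    (d := diag_mx (spectral_diag M)) :
  M^t* = M -> M = P^t* *m d *m P /\ P *m M *m P^t* = d.
Proof.
move=> MH; have PU := spectral_unitarymx M.
have /orthomx_spectralP : M \is normalmx by apply/normalmxP; rewrite MH.
rewrite invmx_unitary // -/P -/d => E; split => //.
by rewrite [X in P *m X]E !mulmxA (unitarymxP PU) mul1mx -mulmxA (unitarymxP PU) mulmx1.
Qed.

Definition singbasis n (A : 'M[C]_n) := spectralmx (A^t* *m A).
Definition sqsingval n (A : 'M[C]_n) i := spectral_diag (A^t* *m A) 0 i.

Lemma singvalsE n (A : 'M[C]_n) i : singvals A i = sqrtC (sqsingval A i).
Proof. by []. Qed.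

Lemma adjmx_mul_hermitian n (A : 'M[C]_n) : (A^t* *m A)^t* = A^t* *m A.
Proof. by rewrite adjmxM trmxCK. Qed.

Lemma sqsingval_dnorm n (A : 'M[C]_n) i :
  sqsingval A i = '[row i (singbasis A) *m A^t*].
Proof.
have [_ /matrixP/(_ i i)] := hermitian_spectral (adjmx_mul_hermitian A).
rewrite [diag_mx _ _ _]mxE eqxx mulr1n /sqsingval /singbasis => <-.
by rewrite dotmxE adjmxM trmxCK -row_form_entry !mulmxA.
Qed.

Lemma sqsingval_ge0 n (A : 'M[C]_n) i : 0 <= sqsingval A i.
Proof. by rewrite sqsingval_dnorm dnorm_ge0. Qed.

Lemma singvals_ge0 n (A : 'M[C]_n) i : 0 <= singvals A i.
Proof. by rewrite sqrtC_ge0 sqsingval_ge0. Qed.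

Lemma singbasis_unitary n (A : 'M[C]_n) : singbasis A \is unitarymx.
Proof. exact: spectral_unitarymx. Qed.

Lemma tnorm_ge0 n (A : 'M[C]_n) : 0 <= tnorm A.
Proof. by apply: sumr_ge0 => i _; apply: singvals_ge0. Qed.

Lemma opnorm_ge0 n (A : 'M[C]_n) : 0 <= opnorm A.
Proof. exact: bigmaxr_ge0 (singvals_ge0 A). Qed.

Lemma le_singvals_opnorm n (A : 'M[C]_n) i : singvals A i <= opnorm A.
Proof. exact: le_bigmaxr (singvals_ge0 A) i. Qed.

Lemma sqsingval_le_opnorm n (A : 'M[C]_n) i : sqsingval A i <= opnorm A ^+ 2.
Proof.
rewrite -(ler_sqrtC (C:=C)) ?nnegrE ?sqsingval_ge0 ?exprn_ge0 ?opnorm_ge0 //.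
by rewrite sqrCK ?opnorm_ge0 // le_singvals_opnorm.
Qed.

Lemma dnorm_mul_adj_le n (B : 'M[C]_n) (r : 'rV[C]_n) :
  '[r *m B^t*] <= opnorm B ^+ 2 * '[r].
Proof.
set P := singbasis B; have [E _] := hermitian_spectral (adjmx_mul_hermitian B).
rewrite -/(singbasis B) -/P in E.
rewrite -(dnorm_mulmx_unitary r (_ : P^t* \is unitarymx)) ?trmxC_unitary ?singbasis_unitary //.
set y := r *m P^t*; set d := diag_mx _ in E.
have -> : '[r *m B^t*] = (y *m d *m y^t*) 0 0.
  by rewrite dotmxE adjmxM trmxCK mulmxA -(mulmxA r) E /y adjmxM trmxCK !mulmxA.
rewrite dotmxE /d mul_mx_diag !mxE mulr_sumr; apply: ler_sum => i _.
rewrite !mxE -/(sqsingval B i) mulrAC mulrC.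
by apply: ler_wpM2r; [rewrite mul_conjC_ge0 | exact: sqsingval_le_opnorm].
Qed.

Lemma normr_tr_mul_le n (A B : 'M[C]_n) : `|\tr (A *m B)| <= tnorm A * opnorm B.
Proof.
set P := singbasis A; have PU : P \is unitarymx := singbasis_unitary A.
have -> : \tr (A *m B) = \sum_i '[row i P, row i P *m A^t* *m B^t*].
  rewrite mxtrace_mulC -[B *m A]mulmx1 -(unitarymx_adjK PU) !mulmxA.
  rewrite -mxtrace_mulC /mxtrace; apply: eq_bigr => i _.
  by rewrite dotmxE !adjmxM !trmxCK !mulmxA -(mulmxA (row i P) B A) row_form_entry !mulmxA.
rewrite /tnorm big_distrl /=; apply: le_trans (ler_norm_sum _ _ _) _.
apply: ler_sum => i _; apply: le_trans (normr_dotmx_le _ _) _.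
rewrite dnorm_row_unitary // sqrtC1 mul1r singvalsE sqsingval_dnorm -/P mulrC.
rewrite -{1}(sqrCK (opnorm_ge0 B)) -sqrtCM ?nnegrE ?exprn_ge0 ?opnorm_ge0 ?dnorm_ge0 //.
rewrite ler_sqrtC ?nnegrE ?mulr_ge0 ?exprn_ge0 ?opnorm_ge0 ?dnorm_ge0 //.
exact: dnorm_mul_adj_le.
Qed.

Lemma opnorm_le1 n (B : 'M[C]_n) :
  (forall r : 'rV[C]_n, '[r *m B^t*] <= '[r]) -> opnorm B <= 1.
Proof.
move=> contr; apply: (bigmaxr_le (singvals_ge0 B)) ler01 _ => i.
rewrite singvalsE -sqrtC1 ler_sqrtC ?nnegrE ?sqsingval_ge0 // sqsingval_dnorm.
by rewrite -(dnorm_row_unitary i (singbasis_unitary B)) contr.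
Qed.

Lemma dnorm_mul_adj_contraction n (W : 'M[C]_n) (r : 'rV[C]_n) :
  opnorm W <= 1 -> '[r *m W^t*] <= '[r].
Proof.
move=> W1; apply: le_trans (dnorm_mul_adj_le W r) _; rewrite ler_piMl ?dnorm_ge0 //.
by rewrite -(expr1n _ 2) lerXn2r ?nnegrE ?opnorm_ge0.
Qed.

Lemma opnorm1_le1 n : opnorm (1%:M : 'M[C]_n) <= 1.
Proof. by apply: opnorm_le1 => r; rewrite adjmx1 mulmx1. Qed.

Lemma tnorm_eq0 n (A : 'M[C]_n) : tnorm A = 0 -> A = 0.
Proof.
move=> tA0.
have sv0 i : sqsingval A i = 0.
  have /eqP := psumr_eq0P (fun j _ => singvals_ge0 A j) tA0 (i := i) erefl.
  by rewrite singvalsE sqrtC_eq0 => /eqP.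
have PA0 : singbasis A *m A^t* = 0.
  apply/row_matrixP => i; rewrite row_mul row0; apply/eqP.
  by rewrite -(dnorm_eq0 (@dotmx C n)); apply/eqP; rewrite -(sv0 i) sqsingval_dnorm.
have : A^t* = 0.
  by rewrite -[A^t*]mul1mx -(unitarymx_adjK (singbasis_unitary A)) -mulmxA PA0 mulmx0.
move/(congr1 (fun M => M^t*)); rewrite trmxCK => ->.
by apply/matrixP => i j; rewrite !mxE conjC0.
Qed.

Lemma tnorm_gt0 n (A : 'M[C]_n) : A != 0 -> 0 < tnorm A.
Proof. by move=> A0; rewrite lt_def tnorm_ge0 andbT; apply: contra A0 => /eqP/tnorm_eq0->. Qed.

Lemma dnorm_partial_isometry_le n (N : 'M[C]_n) (r : 'rV[C]_n) :
  N *m (N^t* *m N) = N -> '[r *m N] <= '[r].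
Proof.
move=> NNtN.
have dnN : '[r *m N] = '[r, r *m N *m N^t*] by rewrite !dotmxE !adjmxM !trmxCK !mulmxA.
have dnNNt : '[r *m N *m N^t*] = '[r *m N].
  by rewrite !dotmxE !adjmxM !trmxCK -!mulmxA (mulmxA (N^t*)) (mulmxA N) NNtN.
have := normr_dotmx_le r (r *m N *m N^t*); rewrite -dnN dnNNt.
set x := '[r *m N]; have [->|x0] := eqVneq x 0; first by rewrite dnorm_ge0.
have sx : 0 < sqrtC x by rewrite lt_def sqrtC_eq0 x0 sqrtC_ge0 dnorm_ge0.
rewrite ger0_norm ?dnorm_ge0 // -{1}(sqrtCK x) expr2 ler_pM2r //.
by rewrite ler_sqrtC // nnegrE dnorm_ge0.
Qed.

Lemma tnorm_polar n (A : 'M[C]_n) :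
  exists2 W : 'M[C]_n, opnorm W <= 1 & \tr (W *m A) = tnorm A.
Proof.
set P := singbasis A; have PU : P \is unitarymx := singbasis_unitary A.
set e := spectral_diag (A^t* *m A).
have [_ Ediag] := hermitian_spectral (adjmx_mul_hermitian A).
rewrite -/(singbasis A) -/P -/e in Ediag.
set g := \row_i (sqrtC (e 0 i))^-1.
have gH : (diag_mx g)^t* = diag_mx g.
  apply/matrixP => i j; rewrite !mxE; have [<-|_] := eqVneq i j; last by rewrite !mulr0n conjC0.
  by rewrite !mulr1n; apply: conj_Creal; rewrite rpredV; apply: sqrtC_real (sqsingval_ge0 A i).
have gKe k : g 0 k * e 0 k * g 0 k * g 0 k = g 0 k.
  rewrite !mxE -{2}(sqrtCK (e 0 k)) expr2.
  set s := sqrtC (e 0 k); have [->|s0] := eqVneq s 0; first by rewrite invr0 !mul0r.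
  by rewrite mulKf // divff // mul1r.
(* W = |A|^+ A^*, with |A|^+ the pseudo-inverse of |A| = P^* diag(sqrt e) P; its adjoint is a
   partial isometry, the polar factor of A *)
exists (P^t* *m diag_mx g *m P *m A^t*).
  apply: opnorm_le1 => r; set N := A *m P^t* *m diag_mx g.
  have -> : (P^t* *m diag_mx g *m P *m A^t*)^t* = N *m P.
    by rewrite !adjmxM !trmxCK gH /N !mulmxA.
  rewrite mulmxA dnorm_mulmx_unitary //.
  have NtN : N^t* *m N = diag_mx (\row_i (g 0 i * e 0 i * g 0 i)).
    rewrite /N !adjmxM !trmxCK gH !mulmxA.
    have -> : diag_mx g *m P *m A^t* *m A *m P^t* *m diag_mx g =
      diag_mx g *m (P *m (A^t* *m A) *m P^t*) *m diag_mx g by rewrite !mulmxA.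
    by rewrite Ediag !mulmx_diag; congr diag_mx; apply/rowP => i; rewrite !mxE.
  apply: dnorm_partial_isometry_le; rewrite NtN /N -mulmxA mulmx_diag.
  by congr (_ *m diag_mx _); apply/rowP => i; rewrite mxE [X in g 0 i * X]mxE mulrC gKe.
rewrite -mulmxA mxtrace_mulC mulmxA mxtrace_mulC !mulmxA -(mulmxA P) Ediag.
rewrite mulmx_diag mxtrace_diag; apply: eq_bigr => i _; rewrite !mxE singvalsE /sqsingval -/e.
rewrite -{1}(sqrtCK (e 0 i)) expr2.
set s := sqrtC (e 0 i); have [->|s0] := eqVneq s 0; first by rewrite !mul0r.
by rewrite mulfK.
Qed.

Lemma normr_tr_contraction_le n (W A : 'M[C]_n) :
  opnorm W <= 1 -> `|\tr (W *m A)| <= tnorm A.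
Proof.
move=> W1; rewrite mxtrace_mulC; apply: le_trans (normr_tr_mul_le A W) _.
by rewrite ler_piMr ?tnorm_ge0.
Qed.

Lemma tnorm_le n (A : 'M[C]_n) c :
  (forall W, opnorm W <= 1 -> `|\tr (W *m A)| <= c) -> tnorm A <= c.
Proof.
have [W W1 WA] := tnorm_polar A => /(_ W W1); apply: le_trans.
by rewrite WA real_ler_norm // ger0_real // tnorm_ge0.
Qed.

Lemma tnormD n (A B : 'M[C]_n) : tnorm (A + B) <= tnorm A + tnorm B.
Proof.
apply: tnorm_le => W W1; rewrite mulmxDr mxtraceD; apply: le_trans (ler_normD _ _) _.
by apply: lerD; apply: normr_tr_contraction_le.
Qed.

Lemma tnormZ n c (A : 'M[C]_n) : tnorm (c *: A) <= `|c| * tnorm A.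
Proof.
apply: tnorm_le => W W1; rewrite -scalemxAr mxtraceZ normrM ler_wpM2l //.
exact: normr_tr_contraction_le.
Qed.

Lemma tnorm0 n : tnorm (0 : 'M[C]_n) = 0.
Proof.
apply/eqP; rewrite eq_le tnorm_ge0 andbT.
by apply: tnorm_le => W _; rewrite mulmx0 mxtrace0 normr0.
Qed.

Lemma normr_tr_le_tnorm n (A : 'M[C]_n) : `|\tr A| <= tnorm A.
Proof. by rewrite -{1}[A]mul1mx normr_tr_contraction_le ?opnorm1_le1. Qed.

Lemma opnorm_tr_attained n (X : 'M[C]_n) :
  exists2 sigma : 'M[C]_n, tnorm sigma <= 1 & opnorm X <= `|\tr (sigma *m X)|.
Proof.
rewrite /opnorm; have [->|[j ->]] := bigmaxr_attained (singvals_ge0 X).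
  by exists 0; rewrite ?tnorm0 ?ler01 ?normr_ge0.
set s := singvals X j; have s0 : 0 <= s := singvals_ge0 X j.
have [->|sn0] := eqVneq s 0; first by exists 0; rewrite ?tnorm0 ?ler01 ?normr_ge0.
set q := row j (singbasis X); set w := q *m X^t*.
have ws : '[w] = s ^+ 2 by rewrite /s singvalsE sqrtCK sqsingval_dnorm.
have q1 : '[q] = 1 by apply/dnorm_row_unitary/singbasis_unitary.
(* the rank-one matrix q^* w / s is the dual witness of the top singular value *)
exists (s^-1 *: (q^t* *m w)).
  apply: tnorm_le => W W1; rewrite -scalemxAr mxtraceZ mulmxA mxtrace_mulC trace_mx11.
  have -> : (w *m (W *m q^t*)) 0 0 = '[w, q *m W^t*] by rewrite dotmxE adjmxM trmxCK.
  rewrite normrM normfV (ger0_norm s0) ler_pdivrMl ?lt_def ?sn0 // mulr1.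
  apply: le_trans (normr_dotmx_le _ _) _; rewrite ws sqrCK // ler_piMr //.
  by rewrite -sqrtC1 ler_sqrtC ?nnegrE ?dnorm_ge0 // -q1 dnorm_mul_adj_contraction.
rewrite -scalemxAl mxtraceZ -mulmxA mxtrace_mulC trace_mx11.
have -> : (w *m X *m q^t*) 0 0 = '[w] by rewrite dotmxE /w adjmxM trmxCK mulmxA.
by rewrite ws expr2 mulKf // ger0_norm.
Qed.

Lemma opnormB n (A B : 'M[C]_n) : opnorm (A - B) <= opnorm A + opnorm B.
Proof.
have [sigma sigma1 h] := opnorm_tr_attained (A - B); apply: le_trans h _.
rewrite mulmxBr mxtraceB; apply: le_trans (ler_normB _ _) _.
by apply: lerD; apply: le_trans (normr_tr_mul_le _ _) _; rewrite ler_piMl ?opnorm_ge0.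
Qed.

Definition sesqmx n (A : 'M[C]_n) (u v : 'rV[C]_n) := (u *m A *m v^t*) 0 0.

Lemma sesqmxDl n (A : 'M[C]_n) u v w : sesqmx A (u + v) w = sesqmx A u w + sesqmx A v w.
Proof. by rewrite /sesqmx !mulmxDl mxE. Qed.

Lemma sesqmxDr n (A : 'M[C]_n) u v w : sesqmx A u (v + w) = sesqmx A u v + sesqmx A u w.
Proof. by rewrite /sesqmx adjmxD mulmxDr mxE. Qed.

Lemma sesqmxZl n (A : 'M[C]_n) c u v : sesqmx A (c *: u) v = c * sesqmx A u v.
Proof. by rewrite /sesqmx -!scalemxAl mxE. Qed.

Lemma sesqmxZr n (A : 'M[C]_n) c u v : sesqmx A u (c *: v) = c^* * sesqmx A u v.
Proof. by rewrite /sesqmx adjmxZ -scalemxAr mxE. Qed.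

Lemma psd_sesqmxC n (A : 'M[C]_n) u v : psd A -> sesqmx A v u = (sesqmx A u v)^*.
Proof.
move=> Apsd; have re w : sesqmx A w w \is Num.real by apply/ger0_real/Apsd.
set a := sesqmx A u v; set b := sesqmx A v u.
(* polarization with u + v and u + i v shows that a + b and i (b - a) are real *)
have /CrealP sum_real : a + b \is Num.real.
  suff -> : a + b = sesqmx A (u + v) (u + v) - (sesqmx A u u + sesqmx A v v).
    by rewrite rpredB ?rpredD.
  by rewrite !sesqmxDl !sesqmxDr -/a -/b; ring.
have /CrealP dif_real : 'i * (b - a) \is Num.real.
  suff -> : 'i * (b - a) =
      sesqmx A (u + 'i *: v) (u + 'i *: v) - (sesqmx A u u + sesqmx A v v).
    by rewrite rpredB ?rpredD.
  rewrite !sesqmxDl !sesqmxDr !sesqmxZl !sesqmxZr -/a -/b conjCi.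
  by rewrite mulrA mulrN -expr2 sqrCi; ring.
rewrite rmorphD /= in sum_real; rewrite rmorphM rmorphB /= conjCi in dif_real.
have dif' : a^* - b^* = b - a by apply: (mulfI (neq0Ci C)); rewrite -dif_real; ring.
apply: (mulfI (_ : (2 : C) != 0)); first by rewrite pnatr_eq0.
transitivity ((a + b) + (b - a)); first by ring.
by rewrite -sum_real -dif'; ring.
Qed.

Lemma psd_adjmx n (A : 'M[C]_n) : psd A -> A^t* = A.
Proof.
move=> Apsd; apply/matrixP => i j; rewrite !mxE.
have entry a b : sesqmx A 'e_a 'e_b = A a b.
  by rewrite /sesqmx adjmx_delta_row -rowE -colE !mxE.
by rewrite -entry psd_sesqmxC // entry conjCK.
Qed.

Lemma normr_unitary_conj_diag_le1 n (W Q : 'M[C]_n) i :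
  opnorm W <= 1 -> Q \is unitarymx -> `|(Q *m W *m Q^t*) i i| <= 1.
Proof.
move=> W1 QU; rewrite -row_form_entry.
have -> : (row i Q *m W *m (row i Q)^t*) 0 0 = '[row i Q, row i Q *m W^t*].
  by rewrite dotmxE adjmxM trmxCK mulmxA.
apply: le_trans (normr_dotmx_le _ _) _; rewrite dnorm_row_unitary // sqrtC1 mul1r.
rewrite -sqrtC1 ler_sqrtC ?nnegrE ?dnorm_ge0 //.
by rewrite -(dnorm_row_unitary i QU) dnorm_mul_adj_contraction.
Qed.

Lemma tnorm_psd_le n (rho : 'M[C]_n) : psd rho -> tnorm rho <= \tr rho.
Proof.
move=> rho_psd; have [E1 E2] := hermitian_spectral (psd_adjmx rho_psd).
move: E1 E2; set Q := spectralmx rho; set l := spectral_diag rho => E1 E2.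
have QU : Q \is unitarymx := spectral_unitarymx rho.
have l_ge0 i : 0 <= l 0 i.
  have /matrixP/(_ i i) := E2; rewrite [diag_mx _ _ _]mxE eqxx mulr1n => <-.
  by rewrite -row_form_entry; apply: rho_psd.
have -> : \tr rho = \sum_i l 0 i.
  by rewrite {1}E1 mxtrace_mulC mulmxA (unitarymxP QU) mul1mx mxtrace_diag.
apply: tnorm_le => W W1; rewrite {1}E1 mulmxA mxtrace_mulC !mulmxA /mxtrace.
apply: le_trans (ler_norm_sum _ _ _) _; apply: ler_sum => i _.
rewrite mul_mx_diag mxE normrM (ger0_norm (l_ge0 i)) ler_piMl //.
exact: normr_unitary_conj_diag_le1.
Qed.

End Schatten.

Lemma linear_ker0_surj (K : fieldType) m n (f : {linear 'M[K]_(m, n) -> 'M[K]_(m, n)}) :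
  (forall X, f X = 0 -> X = 0) -> forall S, exists X, f X = S.
Proof.
move=> ker0 S; have f_free : row_free (lin_mx f).
  apply: inj_row_free => v; rewrite mul_rV_lin => /eqP; rewrite mxvec_eq0 => /eqP/ker0.
  by move/(congr1 mxvec); rewrite vec_mxK linear0.
exists (vec_mx (mxvec S *m invmx (lin_mx f))).
by rewrite -[LHS]mx_rV_lin mulmxKV ?mxvecK // -row_free_unit.
Qed.

Section MapNorms.
Variables (C : numClosedFieldType) (D : nat).

Lemma mxtrace_dualmap (F : {linear 'M[C]_D -> 'M[C]_D}) (xi A : 'M[C]_D) :
  \tr (dualmap F xi *m A) = \tr (xi *m F A).
Proof.
rewrite {2}[A]matrix_sum_delta linear_sum mulmx_sumr raddf_sum /=.
under eq_bigr do rewrite linear_sum mulmx_sumr raddf_sum.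
under eq_bigr do under eq_bigr do rewrite /= linearZ /= -scalemxAr mxtraceZ.
rewrite [LHS]/mxtrace exchange_big /=; apply: eq_bigr => i _.
by rewrite mxE; apply: eq_bigr => j _; rewrite !mxE mulrC.
Qed.

Lemma is_sup_ge0 (S : C -> Prop) x :
  (forall y, S y -> 0 <= y) -> is_sup S x -> 0 <= x.
Proof.
move=> S_ge0 [x_real [x_ub x_lub]]; rewrite real_leNgt ?real0 //; apply/negP => x_lt0.
(* S is empty, so x - 1 would be a smaller upper bound *)
have : x <= x - 1.
  apply: x_lub => [|y Sy]; first by rewrite rpredB ?real1.
  by have := lt_le_trans x_lt0 (le_trans (S_ge0 y Sy) (x_ub y Sy)); rewrite ltxx.
by rewrite -subr_ge0 addrAC subrr add0r oppr_ge0 ler10.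
Qed.

Lemma norm11_set_ge0 (F : 'M[C]_D -> 'M[C]_D) y : norm11_set F y -> 0 <= y.
Proof. by case=> s [_ ->]; rewrite divr_ge0 ?tnorm_ge0. Qed.

Lemma ergodic_set_ge0 (F : 'M[C]_D -> 'M[C]_D) y : ergodic_set F y -> 0 <= y.
Proof. by case=> s [_ [_ ->]]; rewrite divr_ge0 ?tnorm_ge0. Qed.

Lemma norm11_bound (F : 'M[C]_D -> 'M[C]_D) x : F 0 = 0 ->
  is_sup (norm11_set F) x -> forall s, tnorm (F s) <= x * tnorm s.
Proof.
move=> F0 [_ [x_ub _]] s; have [->|s0] := eqVneq s 0; first by rewrite F0 tnorm0 mulr0.
by rewrite -ler_pdivrMr ?tnorm_gt0 //; apply: x_ub; exists s.
Qed.

Lemma ergodic_bound (F : 'M[C]_D -> 'M[C]_D) x : F 0 = 0 ->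
  is_sup (ergodic_set F) x -> forall s, \tr s = 0 -> tnorm (F s) <= x * tnorm s.
Proof.
move=> F0 [_ [x_ub _]] s s_tr0; have [->|s0] := eqVneq s 0; first by rewrite F0 tnorm0 mulr0.
by rewrite -ler_pdivrMr ?tnorm_gt0 //; apply: x_ub; exists s.
Qed.

End MapNorms.

Section Perturbation.
Variables (C : numClosedFieldType) (D : nat).
Variables (F1 F2 : {linear 'M[C]_D -> 'M[C]_D}) (rho1 xi : 'M[C]_D) (tau n12 : C).
Hypotheses (F1_tp : trace_preserving F1) (tau_ge0 : 0 <= tau) (tau_lt1 : tau < 1).
Hypothesis F1_contr : forall s, \tr s = 0 -> tnorm (F1 s) <= tau * tnorm s.
Hypotheses (rho1_psd : psd rho1) (rho1_tr : \tr rho1 = 1) (rho1_fix : F1 rho1 = rho1).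
Hypotheses (xi_fix : dualmap F2 xi = xi) (xi_tr : \tr (rho1 *m xi) = 1).
Hypotheses (n12_ge0 : 0 <= n12) (F12_bound : forall s, tnorm (F1 s - F2 s) <= n12 * tnorm s).

Lemma traceless_fixed_eq0 Y : \tr Y = 0 -> F1 Y = Y -> Y = 0.
Proof.
move=> Y_tr0 FY; apply/eqP; apply: contraT => Y0.
have : tnorm Y <= tau * tnorm Y by rewrite -{1}FY F1_contr.
by rewrite ler_pMl ?tnorm_gt0 // lt_geF.
Qed.

(* the inverse of id - F1 + rho1 Tr is the fundamental matrix of the chain F1 *)
Definition fundamental_map (X : 'M[C]_D) := X - F1 X + \tr X *: rho1.

Fact fundamental_map_is_linear : linear fundamental_map.
Proof.
move=> a X Y; rewrite /fundamental_map linearP mxtraceD mxtraceZ scalerDl -scalerA.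
by rewrite scalerDr scalerBr opprD (addrACA (a *: X)) (addrACA (a *: X - a *: F1 X)).
Qed.

HB.instance Definition _ := GRing.isLinear.Build C 'M[C]_D 'M[C]_D *:%R
  fundamental_map fundamental_map_is_linear.

Lemma tr_fundamental_map X : \tr (fundamental_map X) = \tr X.
Proof. by rewrite /fundamental_map mxtraceD mxtraceB F1_tp subrr add0r mxtraceZ rho1_tr mulr1. Qed.

Lemma poisson_solvable S : \tr S = 0 -> exists2 eta, \tr eta = 0 & eta - F1 eta = S.
Proof.
have ker0 Y : fundamental_map Y = 0 -> Y = 0.
  move=> LY; have Y_tr0 : \tr Y = 0 by rewrite -tr_fundamental_map LY mxtrace0.
  move: LY; rewrite /fundamental_map Y_tr0 scale0r addr0 => /eqP; rewrite subr_eq0.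
  by move/eqP/esym; apply: traceless_fixed_eq0.
move=> S_tr0; have [eta eta_sol] := linear_ker0_surj ker0 S.
have eta_tr0 : \tr eta = 0 by rewrite -tr_fundamental_map eta_sol.
by exists eta => //; move: eta_sol; rewrite /= /fundamental_map eta_tr0 scale0r addr0.
Qed.

Local Notation dev := (1%:M - xi).

Lemma tr_rho1_dev : \tr (rho1 *m dev) = 0.
Proof. by rewrite mulmxBr mulmx1 mxtraceB rho1_tr xi_tr subrr. Qed.

Lemma tr_mul_dev A : \tr (A *m dev) = \tr (F1 A *m dev) + \tr ((F1 A - F2 A) *m xi).
Proof.
have xi_dual : \tr (A *m xi) = \tr (F2 A *m xi).
  by rewrite mxtrace_mulC -{1}xi_fix mxtrace_dualmap mxtrace_mulC.
by rewrite !mulmxBr !mulmx1 !mulmxBl !mxtraceB F1_tp xi_dual addrA subrK.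
Qed.

Lemma tr_mul_dev_split sigma : exists2 eta,
  tnorm eta + tnorm sigma <= (1 + tau) / (1 - tau) * tnorm sigma &
  \tr (sigma *m dev) = \tr ((F1 eta - F2 eta) *m xi) + \tr ((F1 sigma - F2 sigma) *m xi).
Proof.
set A := sigma - \tr sigma *: rho1.
have A_tr0 : \tr A = 0 by rewrite mxtraceB mxtraceZ rho1_tr mulr1 subrr.
have FA_tr0 : \tr (F1 A) = 0 by rewrite F1_tp.
have [eta eta_tr0 eta_sol] := poisson_solvable FA_tr0.
exists eta.
  have A_le : tnorm A <= tnorm sigma + tnorm sigma.
    apply: le_trans (tnormD _ _) _; rewrite lerD2l -scaleNr.
    apply: le_trans (tnormZ _ _) _; rewrite normrN.
    apply: le_trans (ler_wpM2l (normr_ge0 _) (tnorm_psd_le rho1_psd)) _.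
    by rewrite rho1_tr mulr1 normr_tr_le_tnorm.
  have eta_le : tnorm eta * (1 - tau) <= tau * (tnorm sigma + tnorm sigma).
    apply: le_trans (le_trans (F1_contr A_tr0) (ler_wpM2l tau_ge0 A_le)).
    rewrite -eta_sol mulrBr mulr1 mulrC lerBlDr.
    rewrite -{1}(subrK (F1 eta) eta); apply: le_trans (tnormD _ _) _.
    by rewrite lerD2l F1_contr.
  rewrite mulrAC ler_pdivlMr ?subr_gt0 // mulrDl.
  apply: le_trans (lerD eta_le (lexx _)) _.
  by rewrite le_eqVlt; apply/orP; left; apply/eqP; ring.
rewrite tr_mul_dev; congr (_ + _).
have -> : F1 sigma = F1 A + \tr sigma *: rho1 by rewrite linearB linearZ /= rho1_fix subrK.
rewrite mulmxDl mxtraceD -scalemxAl mxtraceZ tr_rho1_dev mulr0 addr0.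
by rewrite -eta_sol mulmxBl mxtraceB tr_mul_dev addrC addKr.
Qed.

Lemma opnorm_dev_le : opnorm dev <= (1 + tau) / (1 - tau) * n12 * opnorm xi.
Proof.
have [sigma sigma_le1 dev_le] := opnorm_tr_attained dev; apply: le_trans dev_le _.
have [eta sum_le ->] := tr_mul_dev_split sigma.
apply: le_trans (ler_normD _ _) _.
apply: le_trans (lerD (normr_tr_mul_le _ _) (normr_tr_mul_le _ _)) _.
rewrite -mulrDl ler_wpM2r ?opnorm_ge0 //.
apply: le_trans (lerD (F12_bound eta) (F12_bound sigma)) _.
rewrite -mulrDr mulrC ler_wpM2r //; apply: le_trans sum_le _.
by rewrite ler_piMr // divr_ge0 ?subr_ge0 ?addr_ge0 ?ler01 // ltW.
Qed.

End Perturbation.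

Theorem mainTheorem6 (C : numClosedFieldType) (D : nat)
  (F1 F2 : {linear 'M[C]_D -> 'M[C]_D}) (rho1 xi : 'M[C]_D) (tau n12 : C) :
  completely_positive F1 -> completely_positive F2 ->
  spectral_radius F1 1 -> spectral_radius F2 1 ->
  trace_preserving F1 ->
  is_sup (ergodic_set F1) tau -> tau < 1 ->
  density rho1 -> F1 rho1 = rho1 ->
  dualmap F2 xi = xi -> \tr (rho1 *m xi) = 1 ->
  is_sup (norm11_set (fun X => F1 X - F2 X)) n12 ->
  let k := (1 + tau) / (1 - tau) * n12 in
  k < 1 ->
  opnorm (1%:M - xi) <= k / (1 - k).
Proof.
move=> _ _ _ _ F1_tp tau_sup tau_lt1 [rho1_psd rho1_tr] rho1_fix xi_fix xi_tr n12_sup k k_lt1.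
have tau_ge0 := is_sup_ge0 (@ergodic_set_ge0 _ _ F1) tau_sup.
have n12_ge0 := is_sup_ge0 (@norm11_set_ge0 _ _ _) n12_sup.
have F1_contr := ergodic_bound (linear0 F1) tau_sup.
have F12_0 : F1 0 - F2 0 = 0 by rewrite !linear0 addr0.
have dev_le : opnorm (1%:M - xi) <= k * opnorm xi.
  exact: (opnorm_dev_le F1_tp tau_ge0 tau_lt1 F1_contr rho1_psd rho1_tr rho1_fix
    xi_fix xi_tr n12_ge0 (norm11_bound F12_0 n12_sup)).
have xi_le : opnorm xi <= 1 + opnorm (1%:M - xi).
  have := opnormB 1%:M (1%:M - xi); rewrite opprB addrC subrK => /le_trans; apply.
  by rewrite lerD2r opnorm1_le1.
have k_ge0 : 0 <= k by rewrite mulr_ge0 // divr_ge0 ?subr_ge0 ?addr_ge0 ?ler01 // ltW.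
rewrite ler_pdivlMr ?subr_gt0 // mulrBr mulr1 lerBlDr.
apply: le_trans dev_le (le_trans (ler_wpM2l k_ge0 xi_le) _).
by rewrite mulrDr mulr1 [k * _]mulrC.
Qed.
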